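(* Let $D,D'$ be torus invariant Weil divisors on the cyclic quotient singularity $X$, and let $K=-[\rho^0]-[\rho^1]$ be the canonical divisor (so $\mathrm{vert}(K)=[1,\tfrac{q+1}{n}]$). Define \[ \mathrm{below}(D)=\mathrm{int}(P_D)\setminus\bigcup_{u\in G(D)}(u+\mathrm{int}\,\sigma^\vee),\quad \mathrm{abelow}(D)=P_D\setminus\bigcup_{u\in G(D)}(u+\sigma^\vee), \] \[ \mathrm{link}(D)=\mathrm{below}(D)\cap\big[\overline{\mathrm{below}(D)}+\mathrm{vert}(K)\big]. \] Then: (1) $\mathrm{link}(D)=\overline{\mathrm{abelow}(D)}\cap\big[\mathrm{abelow}(D)+\mathrm{vert}(K)\big]$; (2) $\big[\mathrm{below}(D)+\mathrm{vert}(D')\big]\cap M=\big[\mathrm{link}(D)+\mathrm{vert}(D')\big]\cap M$; (3) $\big[\mathrm{abelow}(D)+\mathrm{vert}(D')\big]\cap M=\big[\mathrm{link}(D)+\mathrm{vert}(D')-\mathrm{vert}(K)\big]\cap M$.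
   Context: Fix coprime integers $0<q<n$. Let $M=\mathbb Z^2$, $M_{\mathbb Q}=\mathbb Q^2$ (topology induced from $\mathbb R^2$; $\mathrm{int}$ is interior and $\overline{\,\cdot\,}$ is closure), with the standard scalar product $\langle\cdot,\cdot\rangle$. Put $\rho^0=(1,0)$, $\rho^1=(-q,n)$, $\sigma^\vee=\{u\in M_{\mathbb Q}:\langle u,\rho^0\rangle\ge 0,\ \langle u,\rho^1\rangle\ge 0\}$, $R=\mathbb C[\sigma^\vee\cap M]$, $X=\mathrm{Spec}\,R$. A torus invariant Weil divisor is $D=a_0[\rho^0]+a_1[\rho^1]$, $a_i\in\mathbb Z$, with section polyhedron $P_D=\{u\in M_{\mathbb Q}:\langle u,\rho^i\rangle\ge -a_i,\ i=0,1\}=\mathrm{vert}(D)+\sigma^\vee$ for a unique $\mathrm{vert}(D)\in\mathbb Q^2$. $G(D)$ is the set of lattice points $u\in M$ lying on compact edges of $\mathrm{conv}(P_D\cap M)$. Sums of a set and a vector are Minkowski translates. *)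

From mathcomp Require Import all_boot all_order all_algebra.
Set Implicit Arguments. Unset Strict Implicit. Unset Printing Implicit Defensive.
Import Order.TTheory GRing.Theory Num.Theory.
Local Open Scope ring_scope.

Definition pt := (rat * rat)%type.
Definition pset := pt -> Prop.

Definition dot (u v : pt) : rat := u.1 * v.1 + u.2 * v.2.
Definition padd (u v : pt) : pt := (u.1 + v.1, u.2 + v.2).
Definition psub (u v : pt) : pt := (u.1 - v.1, u.2 - v.2).

Definition inM (u : pt) : Prop := (u.1 \is a Num.int) /\ (u.2 \is a Num.int).

Definition rho0 : pt := (1, 0).
Definition rho1 (q n : nat) : pt := (- (q%:R), n%:R).

Definition sigmav (q n : nat) : pset :=
  fun u => 0 <= dot u rho0 /\ 0 <= dot u (rho1 q n).

(* torus invariant Weil divisor D = a0 [rho0] + a1 [rho1], encoded as (a0, a1) *)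
Definition divisor := (int * int)%type.

Definition canK : divisor := (-1, -1)%R.

Definition PD (q n : nat) (D : divisor) : pset :=
  fun u => - (D.1%:~R) <= dot u rho0 /\ - (D.2%:~R) <= dot u (rho1 q n).

(* vert(D): the unique point u with <u, rho^i> = -a_i (i = 0, 1) *)
Definition vert (q n : nat) (D : divisor) : pt :=
  (- (D.1%:~R), (- (D.2%:~R) - q%:R * D.1%:~R) / n%:R).

Definition translate (A : pset) (v : pt) : pset := fun x => A (psub x v).

(* topology on Q^2 induced from R^2 (sup-norm balls with rational radii) *)
Definition intr (A : pset) : pset :=
  fun x => A x /\ exists e : rat, 0 < e /\
    forall y : pt, `|y.1 - x.1| < e -> `|y.2 - x.2| < e -> A y.
Definition clos (A : pset) : pset :=
  fun x => forall e : rat, 0 < e ->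
    exists y : pt, A y /\ `|y.1 - x.1| < e /\ `|y.2 - x.2| < e.

Definition conv (A : pset) : pset :=
  fun x => exists s : seq (rat * pt),
    (forall c, c \in s -> 0 <= c.1 /\ A c.2) /\
    \sum_(c <- s) c.1 = 1 /\
    x = (\sum_(c <- s) c.1 * c.2.1, \sum_(c <- s) c.1 * c.2.2).

Definition face_of (C : pset) (w : pt) : pset :=
  fun x => C x /\ forall y, C y -> dot w x <= dot w y.

Definition compact_edge (C F : pset) : Prop :=
  (exists w : pt, forall x, F x <-> face_of C w x) /\
  (exists x y : pt, F x /\ F y /\ x <> y) /\
  (exists (p d : pt), d <> (0, 0) /\
      forall x, F x -> exists t : rat, x = padd p (t * d.1, t * d.2)) /\
  (exists R : rat, forall x, F x -> `|x.1| <= R /\ `|x.2| <= R).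

Definition GD (q n : nat) (D : divisor) : pset :=
  fun u => inM u /\ exists F : pset,
    compact_edge (conv (fun x => PD q n D x /\ inM x)) F /\ F u.

Definition below (q n : nat) (D : divisor) : pset :=
  fun x => intr (PD q n D) x /\
    ~ (exists u, GD q n D u /\ translate (intr (sigmav q n)) u x).

Definition abelow (q n : nat) (D : divisor) : pset :=
  fun x => PD q n D x /\
    ~ (exists u, GD q n D u /\ translate (sigmav q n) u x).

Definition link (q n : nat) (D : divisor) : pset :=
  fun x => below q n D x /\
    translate (clos (below q n D)) (vert q n canK) x.

From Pilot Require Import Defs.
From mathcomp Require Import all_boot all_order all_algebra.
From mathcomp Require Import ring lra.
Import Order.TTheory GRing.Theory Num.Theory.

(* In the coordinates L x := (<x, rho^0>, <x, rho^1>) every set in the theorem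
   is cut out by componentwise inequalities: P_D is {L x >= -a}, u + sigma^vee
   is {L x >= L u}, and L vert(K) = (1, 1).  The only property of G(D) that
   matters is that its points are lattice points, so L u is integral, as is
   L (x - vert(D')) for lattice points x.  Between integers, L u < L x + 1 is
   the same as L u <= L x; this turns below into abelow after a shift by
   vert(K).  Closures are reached by moving along the diagonal vert(K). *)

Set Implicit Arguments.
Unset Strict Implicit.
Unset Printing Implicit Defensive.

Local Open Scope ring_scope.

Lemma dot_psub x v r : dot (psub x v) r = dot x r - dot v r.
Proof. rewrite /dot /psub /=; ring. Qed.

Lemma dot_padd x v r : dot (padd x v) r = dot x r + dot v r.
Proof. rewrite /dot /padd /=; ring. Qed.

Lemma dot0p r : dot (0, 0) r = 0.
Proof. by rewrite /dot /= !mul0r addr0. Qed.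

Lemma dot_scale t v r : dot (t * v.1, t * v.2) r = t * dot v r.
Proof. rewrite /dot /=; ring. Qed.

Lemma dot_near r x y e : `|y.1 - x.1| < e -> `|y.2 - x.2| < e ->
  `|dot y r - dot x r| <= (`|r.1| + `|r.2|) * e.
Proof.
move=> h1 h2.
have -> : dot y r - dot x r = (y.1 - x.1) * r.1 + (y.2 - x.2) * r.2.
  by rewrite /dot; ring.
apply: le_trans (ler_normD _ _) _.
rewrite !normrM mulrDl.
by apply: lerD; rewrite mulrC; apply: ler_wpM2l => //; apply: ltW.
Qed.

Lemma dot_gt_near r x b : b < dot x r ->
  exists2 e, 0 < e &
    forall y, `|y.1 - x.1| < e -> `|y.2 - x.2| < e -> b < dot y r.
Proof.
move=> hb; set S := `|r.1| + `|r.2|.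
have hS : 0 <= S by rewrite addr_ge0.
have hS1 : 0 < S + 1 by lra.
have hd : 0 < dot x r - b by rewrite subr_gt0.
exists ((dot x r - b) / (S + 1)) => [|y h1 h2]; first by rewrite divr_gt0.
have hSe : S * ((dot x r - b) / (S + 1)) < dot x r - b.
  by rewrite mulrA ltr_pdivrMr // mulrC ltr_pM2l //; lra.
have := dot_near r h1 h2; rewrite -/S ler_norml => /andP[+ _]; lra.
Qed.

Lemma dot_gt_near2 r0 r1 x b0 b1 : b0 < dot x r0 -> b1 < dot x r1 ->
  exists2 e, 0 < e & forall y, `|y.1 - x.1| < e -> `|y.2 - x.2| < e ->
    b0 < dot y r0 /\ b1 < dot y r1.
Proof.
move=> /dot_gt_near[e0 he0 h0] /dot_gt_near[e1 he1 h1].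
exists (Num.min e0 e1) => [|y y1 y2]; first by rewrite lt_min he0.
move: y1 y2; rewrite !lt_min => /andP[y01 y11] /andP[y02 y12].
by split; [apply: h0 | apply: h1].
Qed.

(* Plain [intr] is MathComp's cast from int, hence the qualified name. *)
Lemma intr_dot_gt (A : pset) r b x : 0 < dot r r ->
  (forall y, A y -> b <= dot y r) -> Defs.intr A x -> b < dot x r.
Proof.
move=> hr hA [_ [e [he hball]]].
set S := `|r.1| + `|r.2| + 1.
have hS : 1 <= S by rewrite /S lerDr addr_ge0.
have ht : 0 < e / S by rewrite divr_gt0 //; lra.
have htS : e / S * `|r.1| + e / S * `|r.2| + e / S = e.
  have : S != 0 by rewrite gt_eqF //; lra.
  by rewrite /S => hS0; field.
have htr1 : 0 <= e / S * `|r.1| by rewrite mulr_ge0 // ltW.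
have htr2 : 0 <= e / S * `|r.2| by rewrite mulr_ge0 // ltW.
set y := psub x (e / S * r.1, e / S * r.2).
have hy1 : `|y.1 - x.1| < e.
  by rewrite /y /psub /= addrAC subrr add0r normrN normrM gtr0_norm //; lra.
have hy2 : `|y.2 - x.2| < e.
  by rewrite /y /psub /= addrAC subrr add0r normrN normrM gtr0_norm //; lra.
have := hA y (hball y hy1 hy2); rewrite dot_psub dot_scale.
have : 0 < e / S * dot r r by rewrite mulr_gt0.
lra.
Qed.

Lemma clos_dot_ge (A : pset) r b p :
  (forall y, A y -> b <= dot y r) -> clos A p -> b <= dot p r.
Proof.
move=> hA hc; rewrite leNgt; apply/negP => hlt.
have hneg : - b < dot p (- r.1, - r.2) by move: hlt; rewrite /dot /=; lra.
have [e he hnear] := dot_gt_near hneg.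
have [y [Ay [y1 y2]]] := hc e he.
by have := hnear y y1 y2; have := hA y Ay; rewrite /dot /=; lra.
Qed.

Definition quadrant (r0 r1 : pt) (b0 b1 : rat) : pset :=
  fun y => b0 <= dot y r0 /\ b1 <= dot y r1.

Lemma intr_quadrant r0 r1 b0 b1 x : 0 < dot r0 r0 -> 0 < dot r1 r1 ->
  Defs.intr (quadrant r0 r1 b0 b1) x <-> b0 < dot x r0 /\ b1 < dot x r1.
Proof.
move=> hr0 hr1; split=> [hx | [h0 h1]].
  by split; apply: (intr_dot_gt _ _ hx) => // y [].
split; first by split; apply: ltW.
have [e he hnear] := dot_gt_near2 h0 h1.
exists e; split=> // y y1 y2.
by have [] := hnear y y1 y2; split; apply: ltW.
Qed.

Lemma clos_dot_gt2 (A : pset) r0 r1 b0 b1 p : clos A p ->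
  b0 < dot p r0 -> b1 < dot p r1 ->
  exists y, A y /\ b0 < dot y r0 /\ b1 < dot y r1.
Proof.
move=> hc h0 h1; have [e he hnear] := dot_gt_near2 h0 h1.
have [y [Ay [y1 y2]]] := hc e he.
by exists y; split; last exact: hnear.
Qed.

Lemma clos_segment (A : pset) p v d : 0 < d ->
  (forall t, 0 < t -> t < d -> A (padd p (t * v.1, t * v.2))) -> clos A p.
Proof.
move=> hd hA e he.
set m := Num.min e d; set S := `|v.1| + `|v.2| + 2.
have hme : m <= e by rewrite ge_min lexx.
have hmd : m <= d by rewrite ge_min lexx orbT.
have hm : 0 < m by rewrite lt_min he hd.
have hS : 2 <= S by rewrite /S lerDr addr_ge0.
have ht : 0 < m / S by rewrite divr_gt0 //; lra.
have htS : m / S * `|v.1| + m / S * `|v.2| + 2 * (m / S) = m.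
  have : S != 0 by rewrite gt_eqF //; lra.
  by rewrite /S => hS0; field.
have a1 : 0 <= m / S * `|v.1| by rewrite mulr_ge0 // ltW.
have a2 : 0 <= m / S * `|v.2| by rewrite mulr_ge0 // ltW.
exists (padd p (m / S * v.1, m / S * v.2)); split; first by apply: hA; lra.
rewrite /padd /= !(addrC p.1, addrC p.2) !addrK.
by rewrite !(normrM (m / S)) (gtr0_norm ht); lra.
Qed.

Lemma int_ltE (x y : rat) : x \is a Num.int -> y \is a Num.int ->
  (x < y) = (x + 1 <= y).
Proof.
move=> /intrP[a ->] /intrP[b ->].
by rewrite -[1]/(1%:~R) -rmorphD ltr_int ler_int lezD1.
Qed.

Lemma int_le_of_lt_floorD1 (u P : rat) : u \is a Num.int ->
  u < (Num.floor P + 1)%:~R -> u <= P.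
Proof.
move=> /intrP[m ->]; rewrite ltr_int ltzD1 => hm.
by apply: le_trans (floor_le P); rewrite ler_int.
Qed.

Lemma dot_rho0_gt0 : 0 < dot rho0 rho0.
Proof. by rewrite /dot /= mulr1 mulr0 addr0. Qed.

Section CyclicQuotient.
Variables q n : nat.
Hypothesis n_gt0 : (0 < n)%N.

Local Notation L0 x := (dot x rho0).
Local Notation L1 x := (dot x (rho1 q n)).
Local Notation vK := (vert q n canK).

Lemma dot_rho1_gt0 : 0 < dot (rho1 q n) (rho1 q n).
Proof.
rewrite /dot /= mulrNN; apply: ltr_wpDl; first exact: mulr_ge0.
by rewrite mulr_gt0 ?ltr0n.
Qed.

Lemma L0_vert D : L0 (vert q n D) = - D.1%:~R.
Proof. by rewrite /dot /vert /= mulr1 mulr0 addr0. Qed.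

Lemma L1_vert D : L1 (vert q n D) = - D.2%:~R.
Proof.
have hn : n%:R != 0 :> rat by rewrite pnatr_eq0 -lt0n.
by rewrite /dot /vert /rho1 /=; field.
Qed.

Lemma L0_vK : L0 vK = 1. Proof. by rewrite L0_vert opprK. Qed.
Lemma L1_vK : L1 vK = 1. Proof. by rewrite L1_vert opprK. Qed.

Definition int_coords (y : pt) := L0 y \is a Num.int /\ L1 y \is a Num.int.

Lemma int_coords_inM x : inM x -> int_coords x.
Proof.
move=> [h1 h2]; rewrite /int_coords /dot /=.
by split; rewrite ?rpredD ?rpredM ?rpredN ?rpred0 ?rpred1 ?natr_int.
Qed.

Lemma int_coords_sub_vert x D :
  int_coords x -> int_coords (psub x (vert q n D)).
Proof.
move=> [h0 h1]; rewrite /int_coords !dot_psub L0_vert L1_vert !opprK.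
by split; rewrite rpredD // rpred_int.
Qed.

Lemma int_coords_add_vK y : int_coords y -> int_coords (padd y vK).
Proof.
move=> [h0 h1]; rewrite /int_coords !dot_padd L0_vK L1_vK.
by split; rewrite rpredD ?rpred1.
Qed.

Section Divisor.
Variable D : divisor.

Local Notation a0 := (- D.1%:~R : rat).
Local Notation a1 := (- D.2%:~R : rat).

Lemma GD_int_coords u : GD q n D u -> int_coords u.
Proof. by move=> [/int_coords_inM]. Qed.

Lemma below_iff x : below q n D x <->
  (a0 < L0 x /\ a1 < L1 x) /\
  forall u, GD q n D u -> ~ (L0 u < L0 x /\ L1 u < L1 x).
Proof.
have hS u :
    translate (Defs.intr (sigmav q n)) u x <-> L0 u < L0 x /\ L1 u < L1 x.
  rewrite /translate (intr_quadrant _ _ _ dot_rho0_gt0 dot_rho1_gt0).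
  by rewrite !dot_psub !subr_gt0.
rewrite /below (intr_quadrant _ _ _ dot_rho0_gt0 dot_rho1_gt0); split.
  by move=> [hP hG]; split=> // u hu /hS hux; apply: hG; exists u.
by move=> [hP hG]; split=> // [[u [hu /hS]]]; apply: hG.
Qed.

Lemma abelow_iff x : abelow q n D x <->
  (a0 <= L0 x /\ a1 <= L1 x) /\
  forall u, GD q n D u -> ~ (L0 u <= L0 x /\ L1 u <= L1 x).
Proof.
have hS u : translate (sigmav q n) u x <-> L0 u <= L0 x /\ L1 u <= L1 x.
  by rewrite /translate /sigmav !dot_psub !subr_ge0.
rewrite /abelow; split.
  by move=> [hP hG]; split=> // u hu /hS hux; apply: hG; exists u.
by move=> [hP hG]; split=> // [[u [hu /hS]]]; apply: hG.
Qed.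

Lemma clos_below_sub_vK y : below q n D y -> int_coords y ->
  clos (below q n D) (psub y vK).
Proof.
move=> /below_iff[[g0 g1] hG] [i0 i1].
have a0_int : a0 \is a Num.int by rewrite rpredN rpred_int.
have a1_int : a1 \is a Num.int by rewrite rpredN rpred_int.
move: g0 g1; rewrite !int_ltE // => g0 g1.
apply: (@clos_segment _ _ vK 1 ltr01) => t ht ht1.
apply/below_iff; rewrite !dot_padd !dot_scale !dot_psub L0_vK L1_vK !mulr1.
by split=> [|u hu [h0 h1]]; [split; lra | apply: (hG u hu); split; lra].
Qed.

Lemma link_of_below_int_coords y :
  int_coords y -> below q n D y -> link q n D y.
Proof. by move=> hy hb; split; last exact: clos_below_sub_vK. Qed.

Lemma abelow_iff_below_add_vK y : int_coords y ->
  abelow q n D y <-> below q n D (padd y vK).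
Proof.
move=> [i0 i1]; rewrite abelow_iff below_iff !dot_padd L0_vK L1_vK.
have j0 : L0 y + 1 \is a Num.int by rewrite rpredD.
have j1 : L1 y + 1 \is a Num.int by rewrite rpredD.
have a0_int : a0 \is a Num.int by rewrite rpredN rpred_int.
have a1_int : a1 \is a Num.int by rewrite rpredN rpred_int.
have strictE u : GD q n D u ->
    (L0 u < L0 y + 1 /\ L1 u < L1 y + 1) <-> (L0 u <= L0 y /\ L1 u <= L1 y).
  by move=> /GD_int_coords[u0 u1]; rewrite !int_ltE // !lerD2r.
rewrite !(int_ltE a0_int j0, int_ltE a1_int j1) !lerD2r.
by split=> -[hP hG]; split=> // u hu /(strictE u hu); apply: hG.
Qed.

Lemma clos_abelow_of_link x : link q n D x -> clos (abelow q n D) x.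
Proof.
move=> [/below_iff[[g0 g1] hG] _].
set d := Num.min (L0 x - a0) (L1 x - a1).
have hd0 : d <= L0 x - a0 by rewrite ge_min lexx.
have hd1 : d <= L1 x - a1 by rewrite ge_min lexx orbT.
have hd : 0 < d by rewrite lt_min !subr_gt0 g0 g1.
apply: (@clos_segment _ x (psub (0, 0) vK) d hd) => t ht htd.
apply/abelow_iff; rewrite !dot_padd !dot_scale !dot_psub !dot0p L0_vK L1_vK.
by split=> [|u hu [h0 h1]]; [split; lra | apply: (hG u hu); split; lra].
Qed.

Lemma abelow_sub_vK_of_link x : link q n D x -> abelow q n D (psub x vK).
Proof.
move=> [/below_iff[_ hG] hc]; apply/abelow_iff.
have hP y : below q n D y -> a0 <= L0 y /\ a1 <= L1 y.
  by move=> /below_iff[[y0 y1] _]; split; apply: ltW.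
split; first by split; apply: (clos_dot_ge _ hc) => y /hP[].
move=> u hu; rewrite !dot_psub L0_vK L1_vK => -[h0 h1].
by apply: (hG u hu); split; lra.
Qed.

Lemma below_of_clos_abelow x : clos (abelow q n D) x ->
  abelow q n D (psub x vK) -> below q n D x.
Proof.
move=> hc /abelow_iff[[f0 f1] _]; move: f0 f1.
rewrite !dot_psub L0_vK L1_vK => f0 f1.
apply/below_iff; split; first by split; lra.
move=> u hu [h0 h1]; have [y [/abelow_iff[_ hy] [y0 y1]]] :=
  clos_dot_gt2 hc h0 h1.
by apply: (hy u hu); split; apply: ltW.
Qed.

Lemma clos_below_of_abelow x : abelow q n D x -> clos (below q n D) x.
Proof.
move=> /abelow_iff[[f0 f1] hG].
set d := Num.min ((Num.floor (L0 x) + 1)%:~R - L0 x)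
                 ((Num.floor (L1 x) + 1)%:~R - L1 x).
have hd0 : d <= (Num.floor (L0 x) + 1)%:~R - L0 x by rewrite ge_min lexx.
have hd1 : d <= (Num.floor (L1 x) + 1)%:~R - L1 x by rewrite ge_min lexx orbT.
have hd : 0 < d by rewrite lt_min !subr_gt0 !floorD1_gt.
apply: (@clos_segment _ _ vK d hd) => t ht htd.
apply/below_iff; rewrite !dot_padd !dot_scale L0_vK L1_vK !mulr1.
split; first by split; lra.
move=> u /[dup] hu /GD_int_coords[u0 u1] [h0 h1].
by apply: (hG u hu); split; apply: int_le_of_lt_floorD1 => //; lra.
Qed.

Lemma link_iff x : link q n D x <->
  clos (abelow q n D) x /\ abelow q n D (psub x vK).
Proof.
split=> [hl | [hc ha]].
  by split; [apply: clos_abelow_of_link | apply: abelow_sub_vK_of_link].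
split; first exact: below_of_clos_abelow.
exact: clos_below_of_abelow.
Qed.

End Divisor.
End CyclicQuotient.

Theorem mainTheorem8 (q n : nat) (D D' : divisor) :
  (0 < q)%N -> (q < n)%N -> coprime q n ->
  (* (1) *)
  (forall x : pt, link q n D x <->
     (clos (abelow q n D) x /\
      translate (abelow q n D) (vert q n canK) x)) /\
  (* (2) *)
  (forall x : pt,
     (translate (below q n D) (vert q n D') x /\ inM x) <->
     (translate (link q n D) (vert q n D') x /\ inM x)) /\
  (* (3) *)
  (forall x : pt,
     (translate (abelow q n D) (vert q n D') x /\ inM x) <->
     (translate (translate (link q n D) (vert q n D'))
                (psub (0, 0) (vert q n canK)) x /\ inM x)).
Proof.
move=> _ hqn _.
have hn : (0 < n)%N by apply: leq_ltn_trans hqn.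
have hy x : inM x -> int_coords q n (psub x (vert q n D')).
  by move=> /(int_coords_inM q) /(int_coords_sub_vert hn D').
split; first exact: link_iff.
split=> x; rewrite /translate.
  split=> -[hb hx]; split=> //; last by case: hb.
  exact: (link_of_below_int_coords hn (hy x hx) hb).
have -> : psub (psub x (psub (0, 0) (vert q n canK))) (vert q n D') =
          padd (psub x (vert q n D')) (vert q n canK).
  by rewrite /psub /padd /=; congr pair; ring.
split=> -[hl hx]; split=> //.
  apply: (link_of_below_int_coords hn (int_coords_add_vK hn (hy x hx))).
  exact/(abelow_iff_below_add_vK hn D (hy x hx)).
by apply/(abelow_iff_below_add_vK hn D (hy x hx)); case: hl.
Qed.
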